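(* Let $n\ge 2$, let $R$ be the full, complete rooted binary tree whose leaves are $1,\dots,n$ from left to right, and let $T$ be any full rooted binary tree whose leaves are $1,\dots,n$ from left to right. Let $p,s$ be two distinct nodes of $T$, and let $a,b$ be nodes of $R$ with $a\in X_{I_T(p)}$ and $b\in X_{I_T(s)}$. If $a\preceq_R b$, then $p\preceq_T s$ or $s\preceq_T p$. Moreover, if $a\prec_R b$, then $p\prec_T s$.
   Context: A rooted binary tree is full if every internal node has exactly two children, and complete if all levels are completely filled except possibly the last, where leaves are left-aligned; trees here are ordered (children are left/right), so leaves are read left to right. For a node $x$ of such a tree $T$, $I_T(x)$ denotes the set of leaves of the subtree rooted at $x$; it is an interval of $[n]$. For an interval $I\subseteq[n]$, $X_I$ denotes the (unique) minimum-cardinality set of nodes of $R$ such that the leaf sets $I_R(x)$, $x\in X_I$, partition $I$. In a rooted tree, $u\prec u'$ means $u$ is a strict ancestor of $u'$, and $u\preceq u'$ means $u=u'$ or $u\prec u'$. *)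

From mathcomp Require Import all_boot.
Set Implicit Arguments. Unset Strict Implicit. Unset Printing Implicit Defensive.

(* Ordered full rooted binary trees: every internal node has exactly two
   children (left, right). Leaves are implicitly labelled 1..nleaves t
   from left to right. *)
Inductive btree : Type := BLeaf | BNode of btree & btree.

Fixpoint nleaves (t : btree) : nat :=
  match t with BLeaf => 1 | BNode l r => nleaves l + nleaves r end.

Fixpoint height (t : btree) : nat :=
  match t with BLeaf => 0 | BNode l r => (maxn (height l) (height r)).+1 end.

(* A node is addressed by its path from the root: false = left, true = right. *)
Fixpoint subtree (t : btree) (p : seq bool) : option btree :=
  match p with
  | [::] => Some t
  | b :: p' => match t with
               | BLeaf => None
               | BNode l r => subtree (if b then r else l) p'
               end
  end.

Definition is_node (t : btree) (p : seq bool) : bool := isSome (subtree t p).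

Fixpoint offset (t : btree) (p : seq bool) : nat :=
  match p, t with
  | b :: p', BNode l r => if b then nleaves l + offset r p' else offset l p'
  | _, _ => 0
  end.

(* I_t(x): labels of the leaves of the subtree rooted at node x *)
Definition leafset (t : btree) (x : seq bool) : seq nat :=
  match subtree t x with
  | Some s => iota (offset t x).+1 (nleaves s)
  | None => [::]
  end.

(* left-to-right position of a path within its level (MSB first) *)
Definition bits_val (p : seq bool) : nat := foldl (fun acc (b : bool) => acc.*2 + b) 0 p.

(* complete: all levels above the last are completely filled, and the nodes
   of the last level are left-aligned *)
Definition complete (t : btree) : Prop :=
  (forall p : seq bool, size p < height t -> is_node t p) /\
  (forall p q : seq bool, size p = height t -> size q = height t ->
     is_node t p -> bits_val q <= bits_val p -> is_node t q).

Definition partitions (R : btree) (I : seq nat) (X : seq (seq bool)) : Prop :=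
  uniq X /\ all (is_node R) X /\ perm_eq (flatten [seq leafset R x | x <- X]) I.

(* a belongs to the minimum-cardinality such set X_I *)
Definition in_X (R : btree) (I : seq nat) (a : seq bool) : Prop :=
  exists X, [/\ partitions R I X, a \in X &
                forall Y, partitions R I Y -> size X <= size Y].

Definition anc_eq (u u' : seq bool) : bool := prefix u u'.
Definition anc_strict (u u' : seq bool) : bool := prefix u u' && (u != u').

From mathcomp Require Import all_boot zify.
Set Implicit Arguments. Unset Strict Implicit. Unset Printing Implicit Defensive.

(* Leaf sets of nodes form a laminar family: the leaf sets of two nodes meet
   only if one node is an ancestor of the other. As I_R(b) is contained in
   I_R(a), it lies in both I_T(p) and I_T(s), so p and s are comparable. If
   a ≺ b but s ≺ p, then I_R(a) is contained in I_T(s), and the blocks of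
   X_{I_T(s)} lying below a (b and at least one other, since I_R(b) is a proper
   subset of I_R(a)) can be merged into the single block a, contradicting the
   minimality of X_{I_T(s)}. *)

Lemma nleaves_gt0 t : 0 < nleaves t.
Proof. by elim: t => //= l IHl r IHr; rewrite addn_gt0 IHl. Qed.

Lemma leafset_nil t : leafset t [::] = iota 1 (nleaves t).
Proof. by case: t. Qed.

Lemma leafset_leaf_cons c x : leafset BLeaf (c :: x) = [::].
Proof. by []. Qed.

Lemma leafset_cons l r (c : bool) x : leafset (BNode l r) (c :: x) =
  if c then map (addn (nleaves l)) (leafset r x) else leafset l x.
Proof.
by rewrite /leafset /=; case: c; case: subtree => //= u; rewrite -addnS iotaDl.
Qed.

Lemma leafset_bounds t x i : i \in leafset t x -> 0 < i <= nleaves t.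
Proof.
elim: x t i => [|c x IH] [|l r] i //; rewrite ?leafset_nil ?mem_iota; try lia.
rewrite leafset_cons; case: c => [/mapP [j /IH ? ->] | /IH] /=; lia.
Qed.

Lemma size_leafset_le t x : size (leafset t x) <= nleaves t.
Proof.
elim: x t => [|c x IH] [|l r] //; rewrite ?leafset_nil ?size_iota //.
rewrite leafset_cons; case: c; rewrite ?size_map /=.
- exact: leq_trans (IH r) (leq_addl _ _).
- exact: leq_trans (IH l) (leq_addr _ _).
Qed.

Lemma leafset_nonempty t x : is_node t x -> exists i, i \in leafset t x.
Proof.
rewrite /is_node /leafset; case: subtree => // u _.
by exists (offset t x).+1; rewrite mem_iota leqnn /= -addn1 leq_add2l nleaves_gt0.
Qed.

Lemma leafset_uniq t x : uniq (leafset t x).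
Proof. by rewrite /leafset; case: subtree => // u; exact: iota_uniq. Qed.

Lemma is_node_prefix t u v : prefix u v -> is_node t v -> is_node t u.
Proof.
move=> /prefixP [w ->]; rewrite /is_node.
by elim: u t => [|c u IH] [|l r] //=; case: c; exact: IH.
Qed.

Lemma leafset_prefix t u v : prefix u v -> {subset leafset t v <= leafset t u}.
Proof.
elim: u t v => [|c u IH] t v.
  by move=> _ i /leafset_bounds; rewrite leafset_nil mem_iota; lia.
case: v => [|d v] //; rewrite prefix_cons => /andP [/eqP <- uv].
case: t => [|l r] i; first by rewrite leafset_leaf_cons.
rewrite !leafset_cons; case: c => [/mapP [j /(IH _ _ uv) ju ->] | /(IH _ _ uv)] //.
exact: map_f.
Qed.

Lemma size_leafset_prefix_lt t u v : is_node t v -> prefix u v -> u != v ->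
  size (leafset t v) < size (leafset t u).
Proof.
elim: u t v => [|c u IH] [|l r] [|d v] //; rewrite ?prefix_cons.
- move=> _ _ _; rewrite leafset_nil size_iota leafset_cons.
  have := nleaves_gt0 l; have := nleaves_gt0 r.
  case: d; rewrite ?size_map /=.
  + by have := size_leafset_le r v; lia.
  + by have := size_leafset_le l v; lia.
- move=> nv /andP [/eqP cd uv]; subst d; rewrite eqseq_cons eqxx /= => u_neq_v.
  by rewrite !leafset_cons; case: c nv => nv; rewrite ?size_map; apply: IH.
Qed.

Lemma leafset_meet_prefix t u v i :
  i \in leafset t u -> i \in leafset t v -> prefix u v || prefix v u.
Proof.
elim: u t v i => [|c u IH] t [|d v] i //.
case: t => [|l r]; rewrite ?leafset_leaf_cons //.
rewrite !leafset_cons !prefix_cons; case: c; case: d => /=.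
- by move=> /mapP [j ju ->]; rewrite mem_map; [exact: IH | exact: addnI].
- by move=> /mapP [j /leafset_bounds ? ->] /leafset_bounds; lia.
- by move=> /leafset_bounds ? /mapP [j /leafset_bounds ? ?]; lia.
- exact: IH.
Qed.

Lemma uniq_flatten_map_mem_eq (S T : eqType) (f : S -> seq T) (X : seq S) x y i :
  uniq X -> uniq (flatten (map f X)) -> x \in X -> y \in X ->
  i \in f x -> i \in f y -> x = y.
Proof.
elim: X => [|z X IH] //= /andP [zX uX]; rewrite cat_uniq => /and3P [_ dis uF].
have notin w : w \in X -> i \in f w -> i \notin f z.
  by move=> wX iw; apply: (hasPn dis); apply/flatten_mapP; exists w.
rewrite !inE => /orP [/eqP -> | xX] /orP [/eqP -> | yX] // ix iy.
- by rewrite (negPf (notin y yX iy)) in ix.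
- by rewrite (negPf (notin x xX ix)) in iy.
- exact: IH.
Qed.

Lemma perm_flatten_map_filterC (S T : eqType) (f : S -> seq T) (P : pred S) s :
  perm_eq (flatten (map f (filter P s)) ++ flatten (map f (filter (predC P) s)))
          (flatten (map f s)).
Proof.
rewrite -flatten_cat -map_cat; apply/perm_flatten/perm_map.
by rewrite perm_filterC.
Qed.

Section Partitions.

Variables (R : btree) (J : seq nat).
Hypothesis uJ : uniq J.

Lemma partition_sub X x : partitions R J X -> x \in X -> {subset leafset R x <= J}.
Proof.
move=> [_ [_ pe]] xX i ix; rewrite -(perm_mem pe); apply/flatten_mapP; by exists x.
Qed.

Lemma partition_cover X i : partitions R J X -> i \in J ->
  exists2 y, y \in X & i \in leafset R y.
Proof. by move=> [_ [_ pe]]; rewrite -(perm_mem pe) => /flatten_mapP. Qed.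

Lemma partition_block_eq X x y i : partitions R J X -> x \in X -> y \in X ->
  i \in leafset R x -> i \in leafset R y -> x = y.
Proof.
move=> [uX [_ pe]]; apply: uniq_flatten_map_mem_eq => //.
by rewrite (perm_uniq pe).
Qed.

Lemma partition_node X x : partitions R J X -> x \in X -> is_node R x.
Proof. by case=> _ [/allP nX _]; exact: nX. Qed.

Variables (Y : seq (seq bool)) (a b : seq bool).
Hypotheses (PY : partitions R J Y) (bY : b \in Y) (ab : prefix a b)
           (aJ : {subset leafset R a <= J}).

(* A block y of Y meeting I_R(a) cannot lie strictly above a: it would then
   also meet I_R(b), forcing y = b. *)
Lemma partition_blocks_below :
  perm_eq (flatten [seq leafset R y | y <- Y & prefix a y]) (leafset R a).
Proof.
have uY : uniq (flatten [seq leafset R y | y <- Y]).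
  by case: PY => _ [_ pe]; rewrite (perm_uniq pe).
apply: uniq_perm.
- move: uY; rewrite -(perm_uniq (perm_flatten_map_filterC _ (prefix a) _)).
  by rewrite cat_uniq => /andP [].
- exact: leafset_uniq.
move=> i; apply/flatten_mapP/idP => [[y] | ia].
  by rewrite mem_filter => /andP [ay _]; exact: leafset_prefix.
have [y yY iy] := partition_cover PY (aJ ia).
exists y => //; rewrite mem_filter yY andbT.
case/orP: (leafset_meet_prefix ia iy) => // ya.
have [j jb] := leafset_nonempty (partition_node PY bY).
have jy := leafset_prefix (prefix_trans ya ab) jb.
by rewrite (partition_block_eq PY yY bY jy jb).
Qed.

Lemma partition_coarsen : partitions R J (a :: filter (predC (prefix a)) Y).
Proof.
case: PY => uY [nY pe]; split; last split.
- by rewrite /= filter_uniq // andbT mem_filter /= prefix_refl.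
- rewrite /= (is_node_prefix ab (partition_node PY bY)) /=.
  by apply/allP => y; rewrite mem_filter => /andP [_ /(allP nY)].
- apply: perm_trans pe; apply: perm_trans (perm_flatten_map_filterC _ (prefix a) _).
  by rewrite /= perm_cat2r perm_sym partition_blocks_below.
Qed.

Lemma count_blocks_below : a != b -> 1 < count (prefix a) Y.
Proof.
move=> a_neq_b; rewrite ltnNge; apply/negP => count_le1.
have bF : b \in [seq y <- Y | prefix a y] by rewrite mem_filter ab.
have below_b : [seq y <- Y | prefix a y] = [:: b].
  move: count_le1 bF; rewrite -size_filter.
  by case: filter => [|y [|z w]] //=; rewrite inE => _ /eqP ->.
have := perm_size partition_blocks_below; rewrite below_b /= cats0.
by have := size_leafset_prefix_lt (partition_node PY bY) ab a_neq_b; lia.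
Qed.

End Partitions.

Lemma in_X_prefix_maximal R J a b : uniq J -> in_X R J b -> prefix a b ->
  {subset leafset R a <= J} -> a = b.
Proof.
move=> uJ [Y [PY bY minY]] ab aJ; apply/eqP; apply: contraT => a_neq_b.
have := minY _ (partition_coarsen uJ PY bY ab aJ).
rewrite /= size_filter -(count_predC (prefix a) Y) -add1n leq_add2r.
by rewrite leqNgt (count_blocks_below uJ PY bY ab aJ a_neq_b).
Qed.

Theorem lemma4p4 (n : nat) (R T : btree) (p s a b : seq bool) :
  2 <= n ->
  complete R -> nleaves R = n ->
  nleaves T = n ->
  is_node T p -> is_node T s -> p != s ->
  is_node R a -> is_node R b ->
  in_X R (leafset T p) a -> in_X R (leafset T s) b ->
  anc_eq a b ->
  (anc_eq p s || anc_eq s p) /\ (anc_strict a b -> anc_strict p s).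
Proof.
move=> _ _ _ _ _ _ p_neq_s _ nb [X [PX aX _]] inXb ab.
have [Y [PY bY _]] := inXb.
have [i ib] := leafset_nonempty nb.
have ps := leafset_meet_prefix (partition_sub PX aX (leafset_prefix ab ib))
                        (partition_sub PY bY ib).
split=> //; case/andP=> _ a_neq_b; rewrite /anc_strict p_neq_s andbT.
case/orP: ps => // sp; case/eqP: a_neq_b.
apply: (in_X_prefix_maximal (leafset_uniq T s) inXb ab) => j ja.
exact: leafset_prefix sp _ (partition_sub PX aX ja).
Qed.
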